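(* Let $T,M,\delta,\tau$ be as in the setup, let $\xi>0$, $\varepsilon\in(0,1)$, $\eta\in(0,1)$. Consider the following randomized procedure (ProbPeel). Set $W_1=V_T$ and $i=1$. While $W_i\neq\emptyset$: random estimates $\hat C_i(w)\ge 0$ for all $w\in W_i$ are produced; set $\hat\tau(W_i)=\frac1k\sum_{w\in W_i}\hat C_i(w)$, $L_i=\{w\in W_i:\hat C_i(w)\le k(1+\xi)\hat\tau(W_i)/|W_i|\}$, $W_{i+1}=W_i\setminus L_i$, and $i\leftarrow i+1$. Finally output a set $W$ among the produced nonempty sets $W_j$ maximizing $\hat\tau(W_j)/|W_j|$. Assume that, for every iteration $i$ and conditionally on everything that happened before iteration $i$, the event $E_i=\{\,|\hat C_i(w)-C_{W_i}(w)|\le\varepsilon\, C_{W_i}(w)\text{ for all }w\in W_i\,\}$ has probability at least $1-\eta/2^{i}$. Then with probability at least $1-\eta$ the output satisfies $$\rho(W)\ \ge\ \frac{(1-\varepsilon)^2}{k(1+\xi)(1+\varepsilon)^2}\,\mathrm{OPT}.$$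
   Context: Setup. A temporal network is a pair $T=(V_T,E_T)$ where $V_T$ is a finite set of $n$ vertices and $E_T$ is a finite set of temporal edges $(u,v,t)$ with $u,v\in V_T$ and timestamp $t\in\mathbb{R}_{>0}$; timestamps are assumed distinct. A $k$-vertex $\ell$-edge temporal motif ($k,\ell\ge 2$) is a pair $M=(K,\sigma)$ where $K=(V_K,E_K)$ is a directed, weakly connected multigraph with $|V_K|=k$, $|E_K|=\ell$, and $\sigma$ is an ordering of $E_K$; equivalently $M$ is the sequence $\langle(x_1,y_1),\dots,(x_\ell,y_\ell)\rangle$ of its edges in the order $\sigma$. Given $\delta>0$, a $\delta$-instance of $M$ in a temporal network is a sequence $S=\langle(x'_1,y'_1,t'_1),\dots,(x'_\ell,y'_\ell,t'_\ell)\rangle$ of $\ell$ distinct temporal edges of that network with $t'_1<\dots<t'_\ell$ such that (1) there is a bijection $h$ from the set of vertices appearing in $S$ onto $V_K$ with $h(x'_i)=x_i$ and $h(y'_i)=y_i$ for all $i\in[\ell]$, and (2) $t'_\ell-t'_1\le\delta$. We write $v\in S$ if $v$ is an endpoint of some edge of $S$; every $\delta$-instance contains exactly $k$ vertices. For $W\subseteq V_T$, $T[W]=(W,\{(u,v,t)\in E_T:u,v\in W\})$ is the induced temporal subnetwork and $\mathcal{S}_W$ is the set of $\delta$-instances of $M$ in $T[W]$. A weighting function $\tau$ assigns a weight $\tau(S)>0$ to each $\delta$-instance $S$ of $M$ in $T$; for $W\subseteq V_T$, $\tau(W)=\sum_{S\in\mathcal{S}_W}\tau(S)$. The temporal motif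 degree of $v$ in $T[W]$ is $C_W(v)=\sum_{S\in\mathcal{S}_W:\,v\in S}\tau(S)$. The density of a nonempty $W\subseteq V_T$ is $\rho(W)=\tau(W)/|W|$, and $\mathrm{OPT}=\max_{\emptyset\ne W\subseteq V_T}\rho(W)$ is the optimal value of the Temporal Motif Densest Subnetwork (TMDS) problem. *)

From HB Require Import structures.
From mathcomp Require Import all_boot all_order all_algebra.
From mathcomp Require Import all_classical all_reals all_analysis.
Set Implicit Arguments. Unset Strict Implicit. Unset Printing Implicit Defensive.
Import Order.TTheory GRing.Theory Num.Theory.
Local Open Scope ring_scope.

Section TemporalMotifs.
Variables (R : realType) (V : finType).

Definition tedge := (V * V * R)%type.
Definition tsrc (e : tedge) : V := e.1.1.
Definition tdst (e : tedge) : V := e.1.2.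
Definition ttime (e : tedge) : R := e.2.

(* E_T given as a list of temporal edges; timestamps positive and distinct
   (distinct timestamps make the list duplicate-free, i.e. a finite set). *)
Definition temporal_network (E : seq tedge) : bool :=
  all (fun e => 0 < ttime e) E && uniq (map ttime E).

(* A k-vertex l-edge temporal motif: the sequence <(x_1,y_1),...,(x_l,y_l)>
   of edges of a directed multigraph K on vertex set 'I_k, listed in the
   order sigma; K must be weakly connected and have l edges. *)
Definition weakly_connected (k : nat) (M : seq ('I_k * 'I_k)) : bool :=
  [forall x : 'I_k, forall y : 'I_k,
     connect (fun a b => ((a, b) \in M) || ((b, a) \in M)) x y].

Definition is_motif (k l : nat) (M : seq ('I_k * 'I_k)) : bool :=
  [&& (2 <= k)%N, (2 <= l)%N, size M == l & weakly_connected M].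

Definition verts (S : seq tedge) : seq V :=
  flatten [seq [:: tsrc e; tdst e] | e <- S].

Definition is_instance (k : nat) (M : seq ('I_k * 'I_k)) (delta : R)
    (E : seq tedge) (S : seq tedge) : bool :=
  [&& size S == size M,
      all (fun e => e \in E) S,
      uniq S,
      sorted (fun e f => ttime e < ttime f) S,
      [exists h : {ffun V -> 'I_k},
         [&& all (fun p => (h (tsrc p.1) == p.2.1) && (h (tdst p.1) == p.2.2))
                 (zip S M),
             [forall u, forall v,
                 [&& u \in verts S, v \in verts S & h u == h v] ==> (u == v)]
           & [forall x : 'I_k, has (fun v => h v == x) (verts S)]]]
    & (if S is e :: S' then ttime (last e S') - ttime e <= delta else false)].

Definition induced (E : seq tedge) (W : {set V}) : seq tedge :=
  [seq e <- E | (tsrc e \in W) && (tdst e \in W)].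

Definition candidates (k : nat) (M : seq ('I_k * 'I_k)) (E : seq tedge)
  : seq (seq tedge) :=
  undup [seq [seq tnth (in_tuple E) i | i <- tval t]
        | t <- enum {: (size M).-tuple 'I_(size E)}].

Definition instances (k : nat) (M : seq ('I_k * 'I_k)) (delta : R)
    (E : seq tedge) (W : {set V}) : seq (seq tedge) :=
  [seq S <- candidates M E | is_instance M delta (induced E W) S].

Section Weights.
Variables (k : nat) (M : seq ('I_k * 'I_k)) (delta : R) (E : seq tedge)
          (tau : seq tedge -> R).

Definition tauW (W : {set V}) : R := \sum_(S <- instances M delta E W) tau S.
Definition motif_degree (W : {set V}) (v : V) : R :=
  \sum_(S <- instances M delta E W | v \in verts S) tau S.
Definition density (W : {set V}) : R := tauW W / #|W|%:R.
(* OPT = max over nonempty W of rho(W)  (densities are >= 0) *)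
Definition OPT : R := \big[Num.max/0]_(W : {set V} | W != finset.set0) density W.
End Weights.

(* ---- the ProbPeel procedure, for a fixed realisation of the estimates ----
   Iterations are indexed from 0: index i here is iteration i+1 of the paper.
   Ch i : V -> R are the estimates \hat C_{i+1}(w) produced at that iteration
   (only their values on the current set matter). *)
Definition tauhat (k : nat) (C : V -> R) (W : {set V}) : R :=
  k%:R^-1 * \sum_(w in W) C w.

Definition peel_set (k : nat) (xi : R) (C : V -> R) (W : {set V}) : {set V} :=
  [set w in W | C w <= k%:R * (1 + xi) * tauhat k C W / #|W|%:R].

(* Wset Ch i = W_{i+1} of the paper; W_1 = V_T. Once empty, stays empty. *)
Fixpoint Wset (k : nat) (xi : R) (Ch : nat -> V -> R) (i : nat) : {set V} :=
  match i with
  | 0 => [set: V]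
  | j.+1 => Wset k xi Ch j :\: peel_set k xi (Ch j) (Wset k xi Ch j)
  end.

Definition est_density (k : nat) (xi : R) (Ch : nat -> V -> R) (j : nat) : R :=
  tauhat k (Ch j) (Wset k xi Ch j) / #|Wset k xi Ch j|%:R.

Definition is_output (k : nat) (xi : R) (Ch : nat -> V -> R) (j : nat) : Prop :=
  Wset k xi Ch j != finset.set0 /\
  forall j', Wset k xi Ch j' != finset.set0 -> est_density k xi Ch j' <= est_density k xi Ch j.

End TemporalMotifs.

From Pilot Require Import Defs.
From HB Require Import structures.
From mathcomp Require Import all_boot all_order all_algebra.
From mathcomp Require Import all_classical all_reals all_analysis.
From mathcomp Require Import measurable_realfun ring lra zify.
Set Implicit Arguments. Unset Strict Implicit. Unset Printing Implicit Defensive.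
Import Order.TTheory GRing.Theory Num.Theory.
Local Open Scope ring_scope.

(* The guarantee is deterministic once every estimate is accurate.  Let S be a
   set of optimal density and v the first vertex of S to be peeled, at an
   iteration i with S included in W_i.  Removing v from S cannot increase the
   density, so OPT <= C_S(v) <= C_{W_i}(v); since v was peeled,
     (1 - eps) OPT <= hat C_i(v) <= k (1 + xi) hat rho(W_i)
                   <= k (1 + xi) hat rho(W) <= k (1 + xi) (1 + eps) rho(W),
   which is stronger than the claimed bound.  Each iteration peels at least one
   vertex, so only the first |V| iterations matter, and by the union bound they
   are all accurate with probability at least 1 - sum_i eta / 2^i >= 1 - eta.
   The events involved are measurable because the sets W_i take finitely many
   values with measurable fibers. *)

Section motif_degree.
Variables (R : realType) (V : finType) (E : seq (tedge R V)) (k : nat)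
  (M : seq ('I_k * 'I_k)) (delta : R) (tau : seq (tedge R V) -> R).
Hypothesis tau_gt0 : forall S, is_instance M delta E S -> 0 < tau S.

Local Notation tauW := (tauW M delta E tau).
Local Notation deg := (motif_degree M delta E tau).
Local Notation density := (density M delta E tau).
Local Notation OPT := (OPT M delta E tau).

Definition instance_in (W : {set V}) (S : seq (tedge R V)) :=
  is_instance M delta E S && all (mem W) (verts S).

Lemma is_instance_induced (W : {set V}) S :
  is_instance M delta (Defs.induced E W) S = instance_in W S.
Proof.
have all_induced : all (mem (Defs.induced E W)) S =
    all (mem E) S && all (mem W) (verts S).
  elim: S => [//|e S IH] /=; rewrite /verts /= -/(verts S) IH mem_filter.
  by case: (tsrc e \in W); case: (tdst e \in W); case: (e \in E); rewrite ?andbF.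
rewrite /instance_in /is_instance all_induced.
by case: (size S == size M); case: (all _ S); case: (all _ (verts S));
   rewrite /= ?andbF ?andbT.
Qed.

Lemma tauWE (W : {set V}) :
  tauW W = \sum_(S <- candidates M E | instance_in W S) tau S.
Proof.
by rewrite /Defs.tauW /instances big_filter; apply: eq_bigl => S;
   rewrite is_instance_induced.
Qed.

Lemma motif_degreeE (W : {set V}) v :
  deg W v = \sum_(S <- candidates M E | instance_in W S && (v \in verts S)) tau S.
Proof.
by rewrite /motif_degree /instances big_filter_cond; apply: eq_bigl => S;
   rewrite is_instance_induced.
Qed.

Lemma card_verts_instance S :
  is_instance M delta E S -> #|[set w | w \in verts S]| = k.
Proof.
case/and5P => _ _ _ _ /andP[/existsP[h /and3P[_ /forallP h_inj /forallP h_onto]] _].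
have inj_h : {in [set w | w \in verts S] &, injective h}.
  move=> u v; rewrite !inE => uS vS huv.
  by apply/eqP; have := forallP (h_inj u) v; rewrite uS vS huv eqxx.
rewrite -(card_in_imset inj_h) (_ : h @: _ = [set: 'I_k]) ?cardsT ?card_ord //.
apply/setP => x; rewrite finset.in_setT.
by have /hasP[v vS /eqP <-] := h_onto x; rewrite imset_f ?inE.
Qed.

Lemma sum_motif_degree (W : {set V}) : \sum_(w in W) deg W w = k%:R * tauW W.
Proof.
rewrite tauWE big_distrr /=.
under eq_bigr => w _ do rewrite motif_degreeE big_mkcondr.
rewrite exchange_big /=; apply: eq_bigr => S /andP[instS SW].
rewrite -big_mkcondr /= (eq_bigl (mem [set w | w \in verts S])); last first.
  move=> w; rewrite /= inE; case wS: (w \in verts S); rewrite ?andbF ?andbT //.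
  exact: (allP SW).
by rewrite sumr_const card_verts_instance // mulr_natl.
Qed.

Lemma motif_degree_subset (W1 W2 : {set V}) v :
  W1 \subset W2 -> deg W1 v <= deg W2 v.
Proof.
move=> sW12; rewrite !motif_degreeE [leLHS]big_mkcond [leRHS]big_mkcond.
apply: ler_sum => S _; case: ifPn => [/andP[/andP[instS SW1] vS]|_].
  rewrite /instance_in instS vS (sub_all _ SW1) //.
  by move=> u; apply: (fintype.subsetP sW12).
by case: ifP => // /andP[/andP[/tau_gt0/ltW]].
Qed.

Lemma tauW_setD1 (W : {set V}) v : tauW W = tauW (W :\ v) + deg W v.
Proof.
rewrite !tauWE motif_degreeE (bigID (fun S => v \in verts S)) /= addrC.
congr (_ + _); apply: eq_bigl => S; rewrite /instance_in -andbA; congr (_ && _).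
elim: (verts S) => [//|u s IH] /=.
rewrite in_setD1 -IH in_cons negb_or [v == u]eq_sym.
by case: (u == v); case: (u \in W); case: (all _ s); case: (v \in s).
Qed.

Lemma tauW_set0 : tauW finset.set0 = 0.
Proof.
rewrite tauWE big1 // => -[|e S] /andP[/and5P[_ _ _ _ /andP[_ //]]].
by rewrite /= inE.
Qed.

Lemma tauW_ge0 (W : {set V}) : 0 <= tauW W.
Proof. by rewrite tauWE sumr_ge0 // => S /andP[/tau_gt0/ltW]. Qed.

Lemma density_ge0 (W : {set V}) : 0 <= density W.
Proof. by rewrite divr_ge0 ?tauW_ge0. Qed.

Lemma tauW_le_OPT (W : {set V}) : tauW W <= OPT * #|W|%:R.
Proof.
have [->|W0] := eqVneq W finset.set0; first by rewrite tauW_set0 cards0 mulr0.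
rewrite -[tauW W](divfK (_ : #|W|%:R != 0)); last by rewrite pnatr_eq0 cards_eq0.
rewrite ler_wpM2r //; exact: (le_bigmax_cond _ (P := fun W => W != finset.set0)).
Qed.

Lemma OPT_attained (W0 : {set V}) : W0 != finset.set0 ->
  exists2 W : {set V}, W != finset.set0 & OPT = density W.
Proof.
move=> W0_ne; rewrite /Defs.OPT.
have [W /= W_ne ->] := @eq_bigmax _ _ _ 0 W0 (fun W => W != finset.set0) _ W0_ne
  (fun W _ => density_ge0 W).
by exists W.
Qed.

Lemma OPT_le_motif_degree (W : {set V}) v :
  OPT = density W -> v \in W -> OPT <= deg W v.
Proof.
move=> OPT_W vW.
have tauW_OPT : tauW W = OPT * #|W|%:R.
  by rewrite OPT_W divfK // pnatr_eq0 cards_eq0; apply/set0Pn; exists v.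
have := tauW_le_OPT (W :\ v); rewrite (cardsD1 v W) vW natrD in tauW_OPT.
by rewrite (tauW_setD1 W v) mulrDr mulr1 in tauW_OPT; lra.
Qed.

End motif_degree.

Section peeling.
Variables (R : realType) (V : finType) (k : nat) (xi : R).
Hypotheses (k_gt0 : (0 < k)%N) (xi_ge0 : 0 <= xi).

Lemma peel_threshold (C : V -> R) (W : {set V}) :
  k%:R * (1 + xi) * tauhat k C W / #|W|%:R = (1 + xi) * (\sum_(w in W) C w) / #|W|%:R.
Proof.
have k_neq0 : (k%:R : R) != 0 by rewrite pnatr_eq0 -lt0n.
by rewrite /tauhat; congr (_ / _); field.
Qed.

Lemma peel_set_neq0 (C : V -> R) (W : {set V}) :
  W != finset.set0 -> (forall w, w \in W -> 0 <= C w) ->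
  peel_set k xi C W != finset.set0.
Proof.
move=> W_ne C_ge0; apply/negP => /eqP peel0.
have n_gt0 : (0 : R) < #|W|%:R by rewrite ltr0n card_gt0.
set s := \sum_(w in W) C w.
have above : forall w, w \in W -> (1 + xi) * s / #|W|%:R < C w.
  move=> w wW; rewrite -peel_threshold ltNge; apply/negP => Cw_le.
  by have := finset.in_set0 w; rewrite -peel0 inE wW Cw_le.
have : \sum_(w in W) ((1 + xi) * s / #|W|%:R) < s.
  apply: ltr_sum => //; case/set0Pn: W_ne => w wW.
  by apply/hasP; exists w; rewrite ?mem_index_enum.
rewrite sumr_const -[_ *+ _]mulr_natr divfK ?lt0r_neq0 //.
have : 0 <= xi * s by rewrite mulr_ge0 ?sumr_ge0.
lra.
Qed.

Lemma peel_set_subset (C : V -> R) (W : {set V}) : peel_set k xi C W \subset W.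
Proof. by apply/fintype.subsetP => w; rewrite inE => /andP[]. Qed.

Variable Ch : nat -> V -> R.
Hypothesis Ch_ge0 : forall i w, w \in Wset k xi Ch i -> 0 <= Ch i w.

Local Notation W := (Wset k xi Ch).

Lemma card_Wset i : (#|W i| <= #|V| - i)%N.
Proof.
elim: i => [|i IH]; first by rewrite subn0 max_card.
have [Wi0|Wi_ne] := eqVneq (W i) finset.set0.
  by rewrite /= Wi0 finset.set0D cards0.
have := peel_set_neq0 Wi_ne (@Ch_ge0 i); rewrite -card_gt0.
rewrite /= cardsDS ?peel_set_subset //.
have := subset_leq_card (peel_set_subset (Ch i) (W i)).
by move: IH; move: #|W i| #|peel_set _ _ _ _| #|V|; lia.
Qed.

Lemma Wset_eq0 j : (#|V| <= j)%N -> W j = finset.set0.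
Proof.
move=> Vj; apply/eqP; rewrite -cards_eq0 -leqn0.
by apply: leq_trans (card_Wset j) _; rewrite leqn0 subn_eq0.
Qed.

Lemma Wset_neq0_lt_card j : W j != finset.set0 -> (j < #|V|)%N.
Proof. by rewrite ltnNge; apply: contra => /Wset_eq0 ->. Qed.

Lemma is_outputP j :
  reflect (is_output k xi Ch j)
    ((W j != finset.set0) && [forall j' : 'I_#|V|,
       (W j' != finset.set0) ==> (est_density k xi Ch j' <= est_density k xi Ch j)]).
Proof.
apply: (iffP andP) => [[Wj_ne /forallP est_le]|[Wj_ne est_le]]; split => //.
  by move=> j' Wj'_ne; exact: implyP (est_le (Ordinal (Wset_neq0_lt_card Wj'_ne))) _.
by apply/forallP => j'; apply/implyP; exact: est_le.
Qed.

Lemma first_peeled (S : {set V}) : S != finset.set0 ->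
  exists i v, [/\ S \subset W i, v \in S & v \in peel_set k xi (Ch i) (W i)].
Proof.
move=> S_ne.
have [|n S_out n_min] := ex_minnP (P := fun n => ~~ (S \subset W n)).
  by exists #|V|; rewrite Wset_eq0 // finset.subset0.
case: n S_out n_min => [|i]; first by rewrite /= finset.subsetT.
move=> /subsetPn[v vS vWi1] i_min.
have S_Wi : S \subset W i by apply/negPn/negP => /i_min; rewrite ltnn.
exists i, v; split => //.
by move: vWi1; rewrite /= finset.in_setD (fintype.subsetP S_Wi) // andbT negbK.
Qed.
End peeling.

Section peeling_guarantee.
Variables (R : realType) (V : finType) (E : seq (tedge R V)) (k : nat)
  (M : seq ('I_k * 'I_k)) (delta : R) (tau : seq (tedge R V) -> R) (xi eps : R).
Hypotheses (tau_gt0 : forall S, is_instance M delta E S -> 0 < tau S)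
  (k_gt0 : (0 < k)%N) (xi_ge0 : 0 <= xi).

Local Notation deg := (motif_degree M delta E tau).
Local Notation density := (density M delta E tau).
Local Notation OPT := (OPT M delta E tau).

Definition accurate (C : V -> R) (W : {set V}) :=
  forall w, w \in W -> `|C w - deg W w| <= eps * deg W w.

Lemma tauhat_le (C : V -> R) (W : {set V}) :
  accurate C W -> tauhat k C W <= (1 + eps) * tauW M delta E tau W.
Proof.
move=> C_acc; rewrite /tauhat ler_pdivrMl ?ltr0n // mulrCA -sum_motif_degree.
rewrite mulr_sumr ler_sum // => w /C_acc; rewrite ler_distl => /andP[_].
by rewrite mulrDl mul1r.
Qed.

Variable Ch : nat -> V -> R.
Hypothesis Ch_ge0 : forall i w, w \in Wset k xi Ch i -> 0 <= Ch i w.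

Local Notation W := (Wset k xi Ch).

Lemma OPT_le_output_density j : eps <= 1 ->
  (forall i, W i != finset.set0 -> accurate (Ch i) (W i)) -> is_output k xi Ch j ->
  (1 - eps) * OPT <= k%:R * (1 + xi) * (1 + eps) * density (W j).
Proof.
move=> eps_le1 Ch_acc [Wj_ne est_le_j].
have [S S_ne OPT_S] := OPT_attained tau_gt0 Wj_ne.
have [i [v [S_Wi vS]]] := first_peeled k_gt0 xi_ge0 Ch_ge0 S_ne.
rewrite inE => /andP[vWi Chv_le].
have Wi_ne : W i != finset.set0 by apply/set0Pn; exists v.
have OPT_le_deg : OPT <= deg (W i) v.
  apply: le_trans (OPT_le_motif_degree OPT_S vS) _.
  exact: motif_degree_subset.
have deg_le_Ch : (1 - eps) * deg (W i) v <= Ch i v.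
  by move: (Ch_acc i Wi_ne v vWi); rewrite ler_distl mulrBl mul1r => /andP[].
have Ch_le_est : Ch i v <= k%:R * (1 + xi) * est_density k xi Ch i.
  by rewrite /est_density mulrA.
have est_j_le : est_density k xi Ch j <= (1 + eps) * density (W j).
  by rewrite /est_density /Defs.density mulrA ler_wpM2r // tauhat_le //; exact: Ch_acc.
have subr_eps_ge0 : 0 <= 1 - eps by rewrite subr_ge0.
apply: le_trans (ler_wpM2l subr_eps_ge0 OPT_le_deg) _.
apply: (le_trans deg_le_Ch); apply: (le_trans Ch_le_est).
rewrite -[leRHS]mulrA ler_wpM2l ?mulr_ge0 ?addr_ge0 //.
exact: le_trans (est_le_j i Wi_ne) est_j_le.
Qed.

Lemma output_density_ge j : 0 <= eps -> eps <= 1 ->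
  (forall i, W i != finset.set0 -> accurate (Ch i) (W i)) -> is_output k xi Ch j ->
  (1 - eps) ^+ 2 / (k%:R * (1 + xi) * (1 + eps) ^+ 2) * OPT <= density (W j).
Proof.
move=> eps_ge0 eps_le1 Ch_acc outj.
have OPT_le := OPT_le_output_density eps_le1 Ch_acc outj.
have xi1_gt0 : 0 < 1 + xi by apply: lt_le_trans ltr01 _; rewrite lerDl.
have eps1_gt0 : 0 < 1 + eps by lra.
have A_gt0 : 0 < k%:R * (1 + xi) by rewrite mulr_gt0 ?ltr0n.
have rho_ge0 := density_ge0 tau_gt0 (W j).
have [S S_ne OPT_S] := OPT_attained tau_gt0 (proj1 outj).
have OPT_ge0 : 0 <= OPT by rewrite OPT_S density_ge0.
rewrite mulrAC ler_pdivrMr ?mulr_gt0 ?exprn_gt0 ?ltr0n //.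
set A := k%:R * (1 + xi) in A_gt0 OPT_le *.
set rho := density (W j) in OPT_le *.
have Arho_ge0 : 0 <= A * rho by rewrite mulr_ge0 // ltW.
nra.
Qed.
End peeling_guarantee.

Local Open Scope classical_set_scope.

Section finite_valued_measurability.
Context d (Omega : measurableType d).

Definition measurable_fibers (X : Type) (g : Omega -> X) :=
  forall x, measurable (g @^-1` [set x]).

Lemma measurable_fun_boolP (b : Omega -> bool) :
  measurable_fun setT b <-> measurable [set om | b om].
Proof.
split => [mb|mb]; last by apply: (measurable_fun_bool true); rewrite setTI.
by rewrite -[X in measurable X]setTI; exact: mb.
Qed.

Lemma measurable_preimage_dep (X : finType) (Y : Type) (g : Omega -> X)
    (h : X -> Omega -> Y) (B : set Y) :
  measurable_fibers g -> (forall x, measurable (h x @^-1` B)) ->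
  measurable ((fun om => h (g om) om) @^-1` B).
Proof.
move=> mg mh.
have -> : (fun om => h (g om) om) @^-1` B = \bigcup_x (g @^-1` [set x] `&` h x @^-1` B).
  by apply/seteqP; split => [om Bom|om [x _ [/= <-]]] //; exists (g om).
by apply: fin_bigcup_measurable finite_finset _ => x _; exact: measurableI.
Qed.

Lemma measurable_fun_dep {d'} {Y : measurableType d'} (X : finType)
    (g : Omega -> X) (h : X -> Omega -> Y) :
  measurable_fibers g -> (forall x, measurable_fun setT (h x)) ->
  measurable_fun setT (fun om => h (g om) om).
Proof.
move=> mg mh _ B mB; rewrite setTI; apply: measurable_preimage_dep => // x.
by rewrite -[X in measurable X]setTI; exact: mh.
Qed.

Lemma measurable_fibers_dep (X Y : finType) (g : Omega -> X) (h : X -> Omega -> Y) :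
  measurable_fibers g -> (forall x, measurable_fibers (h x)) ->
  measurable_fibers (fun om => h (g om) om).
Proof. by move=> mg mh y; exact: measurable_preimage_dep mg (mh^~ y). Qed.

Lemma measurable_fibers_set (V : finType) (f : Omega -> {set V}) :
  (forall w, measurable_fun setT (fun om => w \in f om)) -> measurable_fibers f.
Proof.
move=> mf S.
have -> : f @^-1` [set S] = \bigcap_w [set om | (w \in f om) == (w \in S)].
  apply/seteqP; split => [om /= fS w _|om /= fS]; first by rewrite /= fS eqxx.
  by apply/setP => w; apply/eqP; exact: fS.
apply: fin_bigcap_measurable finite_finset _ => w _; apply/measurable_fun_boolP.
case: (w \in S).
- by under eq_fun do rewrite eqb_id; exact: mf.
- by under eq_fun do rewrite eqbF_neg; exact: measurable_neg.
Qed.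

Lemma measurable_fun_forall (X : finType) (b : X -> Omega -> bool) :
  (forall x, measurable_fun setT (b x)) ->
  measurable_fun setT (fun om => [forall x, b x om]).
Proof.
move=> mb; apply/measurable_fun_boolP.
have -> : [set om | [forall x, b x om]] = \bigcap_x [set om | b x om].
  apply/seteqP; split => [om /forallP bx x _|om bx]; first exact: bx.
  by apply/forallP => x; exact: bx.
by apply: fin_bigcap_measurable finite_finset _ => x _; exact/measurable_fun_boolP.
Qed.

Lemma measurable_fun_implyb (b1 b2 : Omega -> bool) :
  measurable_fun setT b1 -> measurable_fun setT b2 ->
  measurable_fun setT (fun om => b1 om ==> b2 om).
Proof.
move=> mb1 mb2; under eq_fun do rewrite implybE.
by apply: measurable_or => //; exact: measurable_neg.
Qed.

End finite_valued_measurability.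

Lemma sigma_algebra_setT (T : Type) (G : set (set T)) : <<s G >> setT.
Proof. by have := sigma_algebraCD (@sigma_algebra0 _ setT G); rewrite setD0. Qed.

Section probability_bounds.
Context d (Omega : measurableType d) (R : realType) (P : probability Omega R).

Lemma probability_fineK (A : set Omega) : measurable A -> P A = (fine (P A))%:E.
Proof. by move=> mA; rewrite fineK // fin_num_measure. Qed.

Lemma probability_setI_ge (A B : set Omega) : measurable A -> measurable B ->
  fine (P A) + fine (P B) - 1 <= fine (P (A `&` B)).
Proof.
move=> mA mB; have PU : P (A `|` B) = (P A + P B - P (A `&` B))%E.
  by apply: measureUfinl => //; apply: le_lt_trans (probability_le1 P mA) _; rewrite ltey.
have := probability_le1 P (measurableU _ _ mA mB).
rewrite PU (probability_fineK mA) (probability_fineK mB).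
by rewrite (probability_fineK (measurableI _ _ mA mB)) -EFinD /= lee_fin; lra.
Qed.

Lemma probability_bigsetI_ge (F : nat -> set Omega) (b : nat -> R) n :
  (forall i, measurable (F i)) -> (forall i, ((1 - b i)%:E <= P (F i))%E) ->
  ((1 - \sum_(i < n) b i)%:E <= P (\big[setI/setT]_(i < n) F i))%E.
Proof.
move=> mF Fge; have mI m : measurable (\big[setI/setT]_(i < m) F i).
  by apply: bigsetI_measurable => i _.
rewrite (probability_fineK (mI n)) lee_fin; elim: n => [|n IH].
  by rewrite !big_ord0 probability_setT subr0.
rewrite !big_ord_recr /=; apply: le_trans (probability_setI_ge (mI n) (mF n)).
by move: (Fge n); rewrite (probability_fineK (mF n)) lee_fin; lra.
Qed.

End probability_bounds.

Section random_peeling.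
Variables (R : realType) (V : finType) (E : seq (tedge R V)) (k : nat)
  (M : seq ('I_k * 'I_k)) (delta : R) (tau : seq (tedge R V) -> R) (xi eps : R)
  (d : measure_display) (Omega : measurableType d) (Chat : nat -> Omega -> V -> R).
Hypothesis Chat_meas : forall i w, measurable_fun setT (fun om => Chat i om w).

Local Notation W om i := (Wset k xi (fun j => Chat j om) i).
Local Notation deg := (motif_degree M delta E tau).

Lemma measurable_tauhat i (T : {set V}) :
  measurable_fun setT (fun om => tauhat k (Chat i om) T).
Proof.
apply: measurable_funM => //; under eq_fun do rewrite big_mkcond /=.
by apply: measurable_sum => w; case: (w \in T).
Qed.

Lemma measurable_fibers_Wset i : measurable_fibers (fun om => W om i).
Proof.
elim: i => [|i IH] S.
  by rewrite [X in measurable X](preimage_cst (finset.setT : {set V}) [set S]); case: ifP.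
apply: (measurable_fibers_dep IH
  (h := fun (T : {set V}) om => T :\: peel_set k xi (Chat i om) T)).
move=> T; apply: measurable_fibers_set => w.
under eq_fun do rewrite finset.in_setD inE negb_and.
apply: measurable_and => //; apply: measurable_or => //.
apply: measurable_neg; apply: measurable_fun_ler => //.
by do 2 apply: measurable_funM => //; exact: measurable_tauhat.
Qed.

Lemma measurable_accurate i :
  measurable [set om | accurate E M delta tau eps (Chat i om) (W om i)].
Proof.
have -> : [set om | accurate E M delta tau eps (Chat i om) (W om i)] =
  [set om | [forall w, (w \in W om i) ==>
    (`|Chat i om w - deg (W om i) w| <= eps * deg (W om i) w)]].
  apply/seteqP; split => om /= acc.
  - by apply/forallP => w; apply/implyP; exact: acc.
  - by move=> w; apply/implyP; exact: (forallP acc w).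
apply/measurable_fun_boolP; apply: (measurable_fun_dep (measurable_fibers_Wset i)
  (h := fun (T : {set V}) om => [forall w, (w \in T) ==>
    (`|Chat i om w - deg T w| <= eps * deg T w)])) => T.
apply: measurable_fun_forall => w; apply: measurable_fun_implyb => //.
apply: measurable_fun_ler => //; apply: measurableT_comp => //.
exact: measurable_funB.
Qed.

Hypothesis Chat_ge0 : forall i om w, w \in W om i -> 0 <= Chat i om w.
Hypotheses (k_gt0 : (0 < k)%N) (xi_ge0 : 0 <= xi).

Lemma measurable_output_density_ge (c : R) :
  measurable [set om | forall j, is_output k xi (fun i => Chat i om) j ->
    c <= density M delta E tau (W om j)].
Proof.
pose est om j := est_density k xi (fun i => Chat i om) j.
have Ch_ge0 om := fun i => @Chat_ge0 i om.
have -> : [set om | forall j, is_output k xi (fun i => Chat i om) j ->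
    c <= density M delta E tau (W om j)] =
  [set om | [forall j : 'I_#|V|, ((W om j != finset.set0) &&
     [forall j' : 'I_#|V|, (W om j' != finset.set0) ==> (est om j' <= est om j)])
     ==> (c <= density M delta E tau (W om j))]].
  apply/seteqP; split => om /= good.
    apply/forallP => j; apply/implyP.
    by move/(is_outputP k_gt0 xi_ge0 (Ch_ge0 om)); exact: good.
  move=> j /[dup] -[Wj_ne _] /(is_outputP k_gt0 xi_ge0 (Ch_ge0 om)) outj.
  have j_lt := Wset_neq0_lt_card k_gt0 xi_ge0 (Ch_ge0 om) Wj_ne.
  exact: implyP (forallP good (Ordinal j_lt)) outj.
have mW_ne j : measurable_fun setT (fun om => W om j != finset.set0).
  exact: (measurable_fun_dep (measurable_fibers_Wset j)
    (h := fun (T : {set V}) _ => T != finset.set0)).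
have mest j : measurable_fun setT (est^~ j).
  apply: (measurable_fun_dep (measurable_fibers_Wset j)
    (h := fun (T : {set V}) om => tauhat k (Chat j om) T / #|T|%:R)) => T.
  by apply: measurable_funM => //; exact: measurable_tauhat.
apply/measurable_fun_boolP; apply: measurable_fun_forall => j.
apply: measurable_fun_implyb.
  apply: measurable_and => //; apply: measurable_fun_forall => j'.
  by apply: measurable_fun_implyb => //; exact: measurable_fun_ler.
exact: (measurable_fun_dep (measurable_fibers_Wset j)
  (h := fun (T : {set V}) _ => c <= density M delta E tau T)).
Qed.

End random_peeling.

Lemma sum_geometric_halves (R : numFieldType) (eta : R) n :
  \sum_(i < n) eta / 2 ^+ i.+1 = eta - eta / 2 ^+ n.
Proof.
elim: n => [|n IH]; first by rewrite big_ord0 expr0 divr1 subrr.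
rewrite big_ord_recr /= IH !exprS.
have : (2 : R) ^+ n != 0 by rewrite expf_neq0 // pnatr_eq0.
by move=> ?; field.
Qed.

Theorem theorem4p1
  (R : realType) (V : finType) (E : seq (tedge R V))
  (k : nat) (M : seq ('I_k * 'I_k)) (l : nat) (delta : R)
  (tau : seq (tedge R V) -> R) (xi eps eta : R)
  (d : measure_display) (Omega : measurableType d) (P : probability Omega R)
  (Chat : nat -> Omega -> V -> R) :
  (0 < #|V|)%N ->
  temporal_network E ->
  is_motif l M ->
  0 < delta ->
  (forall S, is_instance M delta E S -> 0 < tau S) ->
  0 < xi -> 0 < eps < 1 -> 0 < eta < 1 ->
  (forall i w, measurable_fun setT (fun om => Chat i om w)) ->
  (forall i om w, w \in Wset k xi (fun j => Chat j om) i -> 0 <= Chat i om w) ->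
  (forall i (A : set Omega),
      <<s [set B | exists j w (Y : set R),
                    [/\ (j < i)%N, measurable Y &
                        B = (fun om => Chat j om w) @^-1` Y]] >> A ->
      (P (A `&` [set om | forall w, w \in Wset k xi (fun j => Chat j om) i ->
                (`|Chat i om w - motif_degree M delta E tau
                                  (Wset k xi (fun j => Chat j om) i) w|
                <= eps * motif_degree M delta E tau
                           (Wset k xi (fun j => Chat j om) i) w)%R])
       >= (1 - eta / 2 ^+ i.+1)%R%:E * P A)%E) ->
  (P [set om | forall j, is_output k xi (fun i => Chat i om) j ->
        (density M delta E tau (Wset k xi (fun i => Chat i om) j)
        >= (1 - eps) ^+ 2 / (k%:R * (1 + xi) * (1 + eps) ^+ 2)
           * OPT M delta E tau)%R] >= (1 - eta)%R%:E)%E.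
Proof.
move=> _ _ /and4P[k_ge2 _ _ _] _ tau_gt0 /ltW xi_ge0 /andP[/ltW eps_ge0 /ltW eps_le1]
  /andP[eta_gt0 _] Chat_meas Chat_ge0 accurate_cond.
have k_gt0 : (0 < k)%N by apply: leq_trans k_ge2.
pose Acc i := [set om | accurate E M delta tau eps (Chat i om)
  (Wset k xi (fun j => Chat j om) i)].
have mAcc i : measurable (Acc i) by exact: measurable_accurate.
have PAcc i : ((1 - eta / 2 ^+ i.+1)%:E <= P (Acc i))%E.
  have := accurate_cond i setT; rewrite setTI probability_setT mule1.
  by apply; exact: sigma_algebra_setT.
have := probability_bigsetI_ge #|V| mAcc PAcc; rewrite sum_geometric_halves => I_ge.
apply: le_trans (le_trans _ I_ge) _.
  have : 0 <= eta / 2 ^+ #|V| by rewrite divr_ge0 ?exprn_ge0 // ltW.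
  by rewrite lee_fin; lra.
apply: le_measure; rewrite ?inE.
- by apply: bigsetI_measurable => i _; exact: mAcc.
- exact: measurable_output_density_ge.
rewrite -bigcap_mkord => om Acc_om j outj.
have Ch_ge0 := fun i => Chat_ge0 i om.
apply: (output_density_ge tau_gt0 k_gt0 xi_ge0 Ch_ge0 eps_ge0 eps_le1 _ outj).
by move=> i /(Wset_neq0_lt_card k_gt0 xi_ge0 Ch_ge0); exact: Acc_om.
Qed.
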